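(* Let $\hat A$ be a collection of pairwise disjoint nonempty connected subsets of $S^1$ with $|\hat A|\ge 3$ such that $\bigcup_{J\in\hat A}J$ is dense in $S^1$ and each $J\in\hat A$ is either a single point or an open interval. Let $h:\hat A\to\hat A$ be an order preserving bijection, and let $g_1,g_2:S^1\to S^1$ be orientation preserving homeomorphisms both compatible with $h$. Then $g_1$ and $g_2$ have the same rotation number.
   Context: A bijection $h:\hat A\to\hat A$ of a collection of pairwise disjoint subsets of $S^1$ is order preserving if there is a homeomorphism $g:S^1\to S^1$ with $g(J)=h(J)$ for all $J\in\hat A$; such $g$ is called compatible with $h$. The rotation number of an orientation preserving homeomorphism $g$ of $S^1$ is $\lim_{n\to\infty}G^n(x)/n \pmod 1$, where $G:\mathbb{R}\to\mathbb{R}$ is any lift of $g$ under $\theta\mapsto e^{2\pi i\theta}$ and $x\in\mathbb{R}$ is arbitrary (this is well defined modulo $1$). *)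

From HB Require Import structures.
From mathcomp Require Import all_boot all_order all_algebra.
From mathcomp Require Import all_classical all_reals all_analysis.
Import numFieldNormedType.Exports.
Set Implicit Arguments. Unset Strict Implicit. Unset Printing Implicit Defensive.
Import Order.TTheory GRing.Theory Num.Theory.
Local Open Scope classical_set_scope.
Local Open Scope ring_scope.

Section Circle.
Variable R : realType.

Definition S1 : set (R * R) := [set z | z.1 ^+ 2 + z.2 ^+ 2 = 1].

Definition cover (t : R) : R * R := (cos (2 * pi * t), sin (2 * pi * t)).

Definition circ_homeo (g : R * R -> R * R) : Prop :=
  set_bij S1 S1 g /\ {within S1, continuous g} /\
  exists f : R * R -> R * R,
    set_bij S1 S1 f /\ {within S1, continuous f} /\
    (forall z, S1 z -> f (g z) = z) /\ (forall z, S1 z -> g (f z) = z).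

Definition is_lift (g : R * R -> R * R) (G : R -> R) : Prop :=
  continuous G /\ forall t, cover (G t) = g (cover t).

Definition orient_pres_homeo (g : R * R -> R * R) : Prop :=
  circ_homeo g /\ exists G, is_lift g G /\ forall t, G (t + 1) = G t + 1.

Definition has_rotation_number (g : R * R -> R * R) (r : R) : Prop :=
  forall G, is_lift g G -> forall x : R,
    exists k : int,
      (fun n : nat => iter n G x / n%:R) @ \oo --> r + k%:~R.

Definition open_arc (J : set (R * R)) : Prop :=
  exists a b : R, a < b /\ b - a < 1 /\ J = cover @` `]a, b[.

Definition compatible (Ahat : set (set (R * R)))
    (h : set (R * R) -> set (R * R)) (g : R * R -> R * R) : Prop :=
  forall J, Ahat J -> g @` J = h J.

Definition order_preserving (Ahat : set (set (R * R)))
    (h : set (R * R) -> set (R * R)) : Prop :=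
  exists g, circ_homeo g /\ compatible Ahat h g.

End Circle.

From Pilot Require Import Defs.
From HB Require Import structures.
From mathcomp Require Import all_boot all_order all_algebra.
From mathcomp Require Import all_classical all_reals all_analysis.
From mathcomp Require Import ring lra zify.
Import numFieldNormedType.Exports.
Set Implicit Arguments. Unset Strict Implicit. Unset Printing Implicit Defensive.
Import Order.TTheory GRing.Theory Num.Theory.
Local Open Scope classical_set_scope.
Local Open Scope ring_scope.

(* Lift g1 and g2 to increasing degree-one maps F1, F2 of the line; for such a
   map F the limit of F^n(x)/n exists and does not depend on x.  Call p and q
   joined when the segment between them covers a subset of a single element of
   Ahat.  Compatibility with h makes F1 and F2 map joined pairs to joined pairs.
   After shifting F1 by an integer, F2 t0 and F1 t0 are joined for some t0
   covering a point of Ahat.  Then F2 t and F1 t are joined for every such t: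
   a nonzero integer offset between them would cross the segment joining
   F2 t0 to F1 t0, or its translate by 1.  By induction the F1- and F2-orbits
   of t0 stay joined, hence at distance less than 1, so the two rotation
   limits coincide. *)

Section RotationNumber.
Variable R : realType.
Local Notation cover := (@Defs.cover R).
Local Notation S1 := (@Defs.S1 R).
Implicit Types (a b p q r s t u x y : R) (F G : R -> R) (g : R * R -> R * R).

Lemma cover_natD t (n : nat) : cover (t + n%:R) = cover t.
Proof.
rewrite /Defs.cover.
have -> : 2 * pi * (t + n%:R) = 2 * pi * t + pi *+ 2 *+ n.
  by rewrite -mulrnA -(mulr_natl pi (2 * n)) natrM; ring.
by rewrite (periodicn (@cosD2pi R)) (periodicn (@sinD2pi R)).
Qed.

Lemma cover_intD t (m : int) : cover (t + m%:~R) = cover t.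
Proof.
case: m => n; first by rewrite -pmulrn cover_natD.
by have := cover_natD (t - n.+1%:R) n.+1; rewrite subrK => <-.
Qed.

Lemma cover_S1 t : S1 (cover t).
Proof. by rewrite /Defs.S1 /Defs.cover /= cos2Dsin2. Qed.

Lemma S1_cover z : S1 z -> exists t, cover t = z.
Proof.
case: z => x y; rewrite /Defs.S1 /= => hxy.
have hx : -1 <= x <= 1.
  have : x ^+ 2 <= 1 by rewrite -hxy lerDl sqr_ge0.
  by move=> x2_le1; apply/andP; split; nra.
have pi_gt0 := @pi_gt0 R.
have sqrt_y : Num.sqrt (1 - x ^+ 2) = `|y| by rewrite -hxy addrC addKr sqrtr_sqr.
have [y_ge0|y_lt0] := leP 0 y.
  exists (acos x / (2 * pi)); rewrite /Defs.cover mulrC divfK ?mulf_neq0 ?gt_eqF //.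
  by rewrite acosK ?in_itv //= sin_acos // sqrt_y ger0_norm.
exists (- acos x / (2 * pi)); rewrite /Defs.cover mulrC divfK ?mulf_neq0 ?gt_eqF //.
by rewrite cosN sinN acosK ?in_itv //= sin_acos // sqrt_y ltr0_norm // opprK.
Qed.

Lemma cos_eq1_itv0pi x : 0 <= x <= pi -> cos x = 1 -> x = 0.
Proof.
move=> x0pi cx1; apply: (@cos_inj R); rewrite ?in_itv //= ?lexx ?pi_ge0 //.
by rewrite cx1 cos0.
Qed.

Lemma cos_2pi_eq1 s : cos (2 * pi * s) = 1 -> exists m : int, s = m%:~R.
Proof.
move=> cs1; exists (Num.floor s); apply/eqP; rewrite -subr_eq0; apply/eqP.
set e := s - _.
have e_ge0 : 0 <= e by rewrite subr_ge0 floor_le.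
have e_lt1 : e < 1.
  by rewrite ltrBlDr addrC -[1]/(1%:~R) -intrD floorD1_gt.
have ce1 : cos (2 * pi * e) = 1.
  by have := congr1 fst (cover_intD e (Num.floor s)); rewrite /= /e subrK cs1.
have pi_gt0 := @pi_gt0 R.
have [le_pi|gt_pi] := leP (2 * pi * e) pi.
  have : 2 * pi * e = 0 by apply: cos_eq1_itv0pi ce1; rewrite le_pi andbT; nra.
  by nra.
(* the reflection [x |-> 2 pi - x] brings [2 pi e] back into [[0, pi]] *)
have := @cos_eq1_itv0pi (pi *+ 2 - 2 * pi * e).
rewrite cosB cos2pi sin2pi ce1 mul1r mul0r addr0 => /(_ _ erefl) e1.
suff : 0 <= pi *+ 2 - 2 * pi * e <= pi by move=> /e1; rewrite mulr2n; nra.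
by apply/andP; split; rewrite mulr2n; nra.
Qed.

Lemma cover_eq_shift s s' : cover s = cover s' -> exists m : int, s = s' + m%:~R.
Proof.
move=> [cos_eq sin_eq].
have : cos (2 * pi * (s - s')) = 1.
  by rewrite mulrBr cosB cos_eq sin_eq -!expr2 cos2Dsin2.
by move/cos_2pi_eq1 => [m hm]; exists m; rewrite -hm; ring.
Qed.

Lemma cover_shift_itv lo t : exists2 t', lo <= t' <= lo + 1 & cover t' = cover t.
Proof.
set m := Num.floor (t - lo).
have m_le : m%:~R <= t - lo by apply: floor_le.
have m_gt : t - lo < (m + 1)%:~R by apply: floorD1_gt.
rewrite intrD in m_gt.
exists (t - m%:~R); first by apply/andP; split; lra.
by rewrite -[in RHS](subrK m%:~R t) cover_intD.
Qed.

Definition degree_one F := forall t, F (t + 1) = F t + 1.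

Definition monotone_lift g F :=
  [/\ is_lift g F, {mono F : x y / x <= y} & degree_one F].

Lemma degree_one_natD F : degree_one F -> forall t (n : nat), F (t + n%:R) = F t + n%:R.
Proof.
move=> F1 t; elim=> [|n IHn]; first by rewrite !addr0.
by rewrite -addn1 natrD addrA F1 IHn addrA.
Qed.

Lemma degree_one_intD F : degree_one F -> forall t (m : int), F (t + m%:~R) = F t + m%:~R.
Proof.
move=> F1 t [n|n]; first by rewrite -pmulrn degree_one_natD.
have := degree_one_natD F1 (t - n.+1%:R) n.+1; rewrite subrK => ->.
by rewrite NegzE mulrNz -pmulrn addrK.
Qed.

Lemma lift_injective g F : set_inj S1 g ->
  (forall t, cover (F t) = g (cover t)) -> degree_one F -> injective F.
Proof.
move=> g_inj F_lift F1 s s' Fss'.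
have /cover_eq_shift [m s_eq] : cover s = cover s'.
  by apply: g_inj; rewrite ?inE -?F_lift ?Fss' //; exact: cover_S1.
rewrite s_eq degree_one_intD // in Fss'.
have m0 : m%:~R = 0 :> R by lra.
by rewrite s_eq m0 addr0.
Qed.

Lemma lift_monotone F : continuous F -> injective F -> degree_one F ->
  {mono F : x y / x <= y}.
Proof.
move=> Fc F_inj F1 x y.
apply: (@itv_continuous_inj_le _ F `]-oo, +oo[); rewrite ?in_itv //.
- by exists 0, 1; have := F1 0; rewrite !in_itv /= add0r ltr01 => ->; rewrite lerDl.
- exact: continuous_subspaceT.
- by move=> ? ? _ _; exact: F_inj.
Qed.

Lemma intr_neq_halfD (k m : int) : k%:~R != m%:~R + 2^-1 :> R.
Proof.
apply/eqP => k_eq; have [lt_mk|le_km] := ltP m k.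
- have : (m + 1)%:~R <= k%:~R :> R by rewrite ler_int; lia.
  by rewrite intrD; lra.
- have : k%:~R <= m%:~R :> R by rewrite ler_int.
  by lra.
Qed.

Lemma continuous_int_valued_const (D : R -> R) : continuous D ->
  (forall x, exists k : int, D x = k%:~R) -> forall a b, D a = D b.
Proof.
move=> Dc D_int.
have no_half x (k : int) : D x <> k%:~R + 2^-1.
  by have [m ->] := D_int x; apply/eqP; exact: intr_neq_halfD.
suff le_const a b : a <= b -> D a = D b.
  by move=> a b; have [/le_const|/ltW/le_const] := leP a b.
move=> ab; have [ka Dka] := D_int a; have [kb Dkb] := D_int b.
have Dab : {within `[a, b], continuous D} by exact: continuous_subspaceT.
have IVT_half (k : int) :
    Num.min (D a) (D b) <= k%:~R + 2^-1 <= Num.max (D a) (D b) -> False.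
  by move=> /(IVT ab Dab) [c _ /no_half].
rewrite Dka Dkb in IVT_half *; have [lt_ab|lt_ba|-> //] := ltgtP ka kb.
- have : ka%:~R + 1 <= kb%:~R :> R by rewrite -[1]/(1%:~R) -intrD ler_int; lia.
  move=> le_ab; case: (IVT_half ka); rewrite ge_min le_max.
  by apply/andP; split; apply/orP; [left|right]; lra.
- have : kb%:~R + 1 <= ka%:~R :> R by rewrite -[1]/(1%:~R) -intrD ler_int; lia.
  move=> le_ba; case: (IVT_half kb); rewrite ge_min le_max.
  by apply/andP; split; apply/orP; [right|left]; lra.
Qed.

Lemma lift_eq_shift F G : continuous F -> continuous G ->
  (forall t, cover (G t) = cover (F t)) -> exists c : int, forall t, G t = F t + c%:~R.
Proof.
move=> Fc Gc GF.
have D_int x : exists k : int, (G \- F) x = k%:~R.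
  by have [m Gx] := cover_eq_shift (GF x); exists m => /=; rewrite Gx; ring.
have Dc : continuous (G \- F) by move=> x; apply: continuousB; [exact: Gc|exact: Fc].
have [c D0] := D_int 0; exists c => t.
by rewrite -D0 (continuous_int_valued_const Dc D_int 0 t) /= addrC subrK.
Qed.

Lemma iter_addz F G (c : int) : degree_one F -> (forall t, G t = F t + c%:~R) ->
  forall n x, iter n G x = iter n F x + n%:R * c%:~R.
Proof.
move=> F1 GF; elim=> [|n IHn] x; first by rewrite mul0r addr0.
rewrite !iterS IHn GF -[n%:R]/((n%:Z)%:~R) -intrM degree_one_intD // intrM.
by rewrite -[(n%:Z)%:~R]/(n%:R : R) -addn1 natrD; ring.
Qed.

Lemma cvg_of_dist_le_div (u : nat -> R) l (C : R) :
  (forall n, (0 < n)%N -> `|u n - l| <= C / n%:R) -> u @ \oo --> l.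
Proof.
move=> u_near; apply/cvgrPdist_lt => e e_gt0; near=> n.
have n_gt0 : (0 < n)%N by near: n; exact: nbhs_infty_gt.
have Ce_lt : C / e < n%:R by near: n; exact: nbhs_infty_gtr.
have nR : (0 : R) < n%:R by rewrite ltr0n.
rewrite distrC; apply: le_lt_trans (u_near n n_gt0) _.
by rewrite ltr_pdivrMr // mulrC -ltr_pdivrMr.
Unshelve. all: by end_near.
Qed.

Lemma cvg_ratio_shift (u v : nat -> R) (c C l : R) :
  (forall n, `|v n - (u n + n%:R * c)| <= C) ->
  (fun n => u n / n%:R) @ \oo --> l -> (fun n => v n / n%:R) @ \oo --> l + c.
Proof.
move=> uv ul.
have vu : (fun n => v n / n%:R - u n / n%:R) @ \oo --> c.
  apply: (@cvg_of_dist_le_div _ _ C) => n n_gt0.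
  have nR : (0 : R) < n%:R by rewrite ltr0n.
  have -> : v n / n%:R - u n / n%:R - c = (v n - (u n + n%:R * c)) / n%:R.
    by field; rewrite gt_eqF.
  rewrite normrM [`|_^-1|]ger0_norm; last by rewrite invr_ge0 ltW.
  by rewrite ler_pM2r ?invr_gt0.
have -> : (fun n => v n / n%:R) =
    (fun n => v n / n%:R - u n / n%:R) \+ (fun n => u n / n%:R).
  by apply/funext => n /=; rewrite subrK.
by rewrite addrC; apply: cvgD.
Qed.

Section RotationLimit.
Variable F : R -> R.
Hypotheses (F_homo : {homo F : x y / x <= y}) (F1 : degree_one F).

Lemma iter_homo n : {homo iter n F : x y / x <= y}.
Proof. by elim: n => [//|n IHn] x y xy /=; apply/F_homo/IHn. Qed.

Lemma iter_degree_one n : degree_one (iter n F).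
Proof. by elim: n => [//|n IHn] t /=; rewrite IHn F1. Qed.

(* [y] is an integer translate of some [y'] in [[x, x + 1)] *)
Lemma iter_displacement_le1 n x y : `|(iter n F y - y) - (iter n F x - x)| <= 1.
Proof.
set m := Num.floor (y - x).
have m_le : m%:~R <= y - x by apply: floor_le.
have m_gt : y - x < (m + 1)%:~R by apply: floorD1_gt.
rewrite intrD in m_gt.
set y' := y - m%:~R.
have -> : iter n F y = iter n F y' + m%:~R.
  by rewrite -degree_one_intD ?subrK //; exact: iter_degree_one.
have lo : iter n F x <= iter n F y' by apply: iter_homo; rewrite /y'; lra.
have hi : iter n F y' <= iter n F x + 1.
  by rewrite -(iter_degree_one n x); apply: iter_homo; rewrite /y'; lra.
by rewrite ler_norml; apply/andP; split; rewrite /y' in lo hi *; lra.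
Qed.

Lemma iter_mul_dev (k n : nat) : `|iter (k * n) F 0 - k%:R * iter n F 0| <= k%:R.
Proof.
elim: k => [|k IHk]; first by rewrite mul0n /= mul0r subrr normr0.
rewrite mulSn iterD; set y := iter (k * n) F 0.
have := iter_displacement_le1 n 0 y; rewrite !subr0 => disp.
have -> : iter n F y - k.+1%:R * iter n F 0 =
    (iter n F y - y - iter n F 0) + (y - k%:R * iter n F 0).
  by rewrite -[k.+1]addn1 natrD; ring.
by apply: le_trans (ler_normD _ _) _; rewrite -[k.+1]addn1 natrD; lra.
Qed.

Lemma iter_ratio_mul m n : (0 < m)%N -> (0 < n)%N ->
  `|iter (m * n) F 0 / (m * n)%:R - iter n F 0 / n%:R| <= n%:R^-1.
Proof.
move=> m_gt0 n_gt0.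
have mR : (0 : R) < m%:R by rewrite ltr0n.
have nR : (0 : R) < n%:R by rewrite ltr0n.
have -> : iter (m * n) F 0 / (m * n)%:R - iter n F 0 / n%:R =
    (iter (m * n) F 0 - m%:R * iter n F 0) / (m%:R * n%:R).
  by rewrite natrM; field; rewrite !gt_eqF.
rewrite normrM [`|(_ * _)^-1|]ger0_norm; last by rewrite invr_ge0 mulr_ge0 ?ltW.
rewrite ler_pdivrMr ?mulr_gt0 //.
have -> : n%:R^-1 * (m%:R * n%:R) = m%:R :> R by field; rewrite gt_eqF.
exact: iter_mul_dev.
Qed.

Lemma cvg_iter_ratio0 : cvg ((fun n => iter n F 0 / n%:R) @ \oo).
Proof.
apply: cauchy_cvg; apply: cauchy_exP => e e_gt0.
set M := (Num.truncn (2 / e)).+1.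
have M_gt : 2 / e < M%:R by apply: truncnS_gt.
have MR : (0 : R) < M%:R by rewrite ltr0n.
exists (iter M F 0 / M%:R), M => // n Mn.
have n_gt0 : (0 < n)%N by exact: leq_trans Mn.
rewrite -ball_normE; change (`|iter M F 0 / M%:R - iter n F 0 / n%:R| < e).
have M_gt0 : (0 < M)%N by [].
have le_M := iter_ratio_mul n_gt0 M_gt0; have le_n := iter_ratio_mul M_gt0 n_gt0.
rewrite mulnC in le_n.
have : n%:R^-1 <= M%:R^-1 :> R by rewrite lef_pV2 ?posrE ?ltr0n ?ler_nat.
have : 2 / M%:R < e by rewrite ltr_pdivrMr // mulrC -ltr_pdivrMr.
have -> : (2 : R) / M%:R = M%:R^-1 + M%:R^-1 by field; rewrite gt_eqF.
move: le_n le_M; rewrite ltr_norml !ler_norml; lra.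
Qed.

Lemma rotation_limit_exists :
  exists rho : R, forall x, (fun n => iter n F x / n%:R) @ \oo --> rho.
Proof.
exists (limn (fun n => iter n F 0 / n%:R)) => x.
rewrite -[limn _]addr0; apply: (@cvg_ratio_shift (fun n => iter n F 0) _ 0 (1 + `|x|)).
- move=> n; rewrite mulr0 addr0.
  have -> : iter n F x - iter n F 0 = (iter n F x - x - (iter n F 0 - 0)) + x by ring.
  by apply: le_trans (ler_normD _ _) _; rewrite lerD2r iter_displacement_le1.
- exact: cvg_iter_ratio0.
Qed.

End RotationLimit.

Lemma rotation_limit_close F G (x0 C rho : R) :
  {homo G : x y / x <= y} -> degree_one G ->
  (forall n, `|iter n G x0 - iter n F x0| <= C) ->
  (forall x, (fun n => iter n F x / n%:R) @ \oo --> rho) ->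
  forall x, (fun n => iter n G x / n%:R) @ \oo --> rho.
Proof.
move=> G_homo G1 GF_close F_rho.
have [rhoG G_rho] := rotation_limit_exists G_homo G1.
have G_rho0 : (fun n => iter n G x0 / n%:R) @ \oo --> rho.
  rewrite -[rho]addr0.
  by apply: (cvg_ratio_shift _ (F_rho x0)) => n; rewrite mulr0 addr0.
by rewrite -(cvg_unique _ (G_rho x0) G_rho0).
Qed.

Lemma orient_pres_homeo_lift g : orient_pres_homeo g -> exists F, monotone_lift g F.
Proof.
case=> [[[_ g_inj _] _] [F [[Fc F_lift] F1]]]; exists F; split; [by [] | | by []].
exact: lift_monotone Fc (lift_injective g_inj F_lift F1) F1.
Qed.

Lemma has_rotation_number_lift g F rho : is_lift g F -> degree_one F ->
  (forall x, (fun n => iter n F x / n%:R) @ \oo --> rho) -> has_rotation_number g rho.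
Proof.
move=> [Fc F_lift] F1 F_rho G [Gc G_lift] x.
have [c GF] := lift_eq_shift Fc Gc (fun t => etrans (G_lift t) (esym (F_lift t))).
exists c; apply: (cvg_ratio_shift _ (F_rho x)) => n.
by rewrite (iter_addz F1 GF) subrr normr0.
Qed.

Definition between p u q := (p <= u /\ u <= q) \/ (q <= u /\ u <= p).

Lemma between_refl p q : between p p q.
Proof. by case: (leP p q) => ?; [left|right]; split; lra. Qed.

Lemma between_sym p u q : between p u q -> between q u p.
Proof. by case=> ?; [right|left]. Qed.

Lemma between_split p q r u : between p u r -> between p u q \/ between q u r.
Proof.
rewrite /between => -[[? ?]|[? ?]]; case: (leP u q) => ?.
- by left; left.
- by right; left; split; lra.
- by right; right; split; lra.
- by left; right; split; lra.
Qed.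

Lemma between_trans p q r u : between p r q -> between p u r -> between p u q.
Proof. by rewrite /between => -[[? ?]|[? ?]] [[? ?]|[? ?]]; lra. Qed.

Section Joined.
Variables (Ahat : set (set (R * R))) (h : set (R * R) -> set (R * R)).
Hypotheses (A_S1 : forall J, Ahat J -> J `<=` S1)
  (A_ne : forall J, Ahat J -> J !=set0)
  (A_disj : forall J K, Ahat J -> Ahat K -> J <> K -> J `&` K = set0)
  (A_two : exists J1 J2, [/\ Ahat J1, Ahat J2 & J1 <> J2])
  (A_shape : forall J, Ahat J -> (exists z, J = [set z]) \/ open_arc J)
  (hA : forall J, Ahat J -> Ahat (h J)).

Lemma Ahat_eq_of_meet J K z : Ahat J -> Ahat K -> J z -> K z -> J = K.
Proof.
move=> AJ AK Jz Kz; apply: contrapT => JK.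
by have /seteqP[/(_ z (conj Jz Kz))] := A_disj AJ AK JK.
Qed.

Definition joined p q := exists2 K, Ahat K & forall u, between p u q -> K (cover u).

Lemma joined_refl K p : Ahat K -> K (cover p) -> joined p p.
Proof. by move=> AK Kp; exists K => // u [[? ?]|[? ?]]; have -> : u = p by lra. Qed.

Lemma joined_sym p q : joined p q -> joined q p.
Proof. by case=> K AK Kpq; exists K => // u /between_sym /Kpq. Qed.

Lemma joined_trans p q r : joined p q -> joined q r -> joined p r.
Proof.
move=> [K AK Kpq] [K' AK' Kqr].
have KK' : K = K'.
  by apply: (Ahat_eq_of_meet (z := cover q)) => //; [apply: Kpq|apply: Kqr];
    rewrite /between; lra.
by exists K => // u /(between_split q) [/Kpq //|]; rewrite KK'; exact: Kqr.
Qed.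

Lemma joined_intD p q (m : int) : joined p q -> joined (p + m%:~R) (q + m%:~R).
Proof.
move=> [K AK Kpq]; exists K => // u pqu.
rewrite -(subrK m%:~R u) cover_intD; apply: Kpq.
by case: pqu => -[? ?]; [left|right]; split; lra.
Qed.

Lemma joined_subl p q r : joined p q -> between p r q -> joined p r.
Proof. by move=> [K AK Kpq] pqr; exists K => // u /(between_trans pqr) /Kpq. Qed.

Lemma joined_subr p q r : joined p q -> between p r q -> joined r q.
Proof. by move=> /joined_sym pq /between_sym /(joined_subl pq) /joined_sym. Qed.

(* a second element of [Ahat] meets the image of every segment of length 1 *)
Lemma joined_lt1 p q : joined p q -> `|p - q| < 1.
Proof.
move=> [K AK Kpq]; rewrite ltNge; apply/negP => pq_ge1.
have [J AJ JK] : exists2 J, Ahat J & J <> K.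
  have [J1 [J2 [AJ1 AJ2 J12]]] := A_two.
  have [J1K|] := pselect (J1 = K); last by exists J1.
  by exists J2 => // J2K; apply: J12; rewrite J1K J2K.
have [z Jz] := A_ne AJ; have [t tz] := S1_cover (A_S1 AJ Jz).
apply: JK; apply: (Ahat_eq_of_meet (z := z)) => //; rewrite -tz.
have [pq|qp] := leP p q.
- have [t' /andP[? ?] <-] := cover_shift_itv p t; apply: Kpq; left.
  by move: pq_ge1; rewrite ler0_norm ?subr_le0 // => ?; split; lra.
- have [t' /andP[? ?] <-] := cover_shift_itv q t; apply: Kpq; right.
  by move: pq_ge1; rewrite ger0_norm ?subr_ge0 ?(ltW qp) // => ?; split; lra.
Qed.

Lemma joined_of_mem K p q : Ahat K -> K (cover p) -> K (cover q) ->
  exists m : int, joined p (q + m%:~R).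
Proof.
move=> AK Kp Kq; case: (A_shape AK) => [[z Kz]|[a [b [ab [ba1 Kab]]]]].
  have [m pq] : exists m : int, p = q + m%:~R.
    by apply: cover_eq_shift; move: Kp Kq; rewrite Kz => -> ->.
  by exists m; rewrite -pq; exact: joined_refl AK Kp.
move: (Kp) (Kq); rewrite Kab => -[v abv vp] [w abw wq].
have [i pv] := cover_eq_shift (esym vp); have [j qw] := cover_eq_shift (esym wq).
exists (i - j); exists K => // u pqu.
rewrite Kab; exists (u - i%:~R); last by rewrite -[in RHS](subrK i%:~R u) cover_intD.
move: abv abw; rewrite /= !in_itv /= => /andP[? ?] /andP[? ?].
by rewrite intrB in pqu; apply/andP; case: pqu => -[? ?]; split; lra.
Qed.

Lemma lift_mem_image g F K t : monotone_lift g F -> compatible Ahat h g ->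
  Ahat K -> K (cover t) -> h K (cover (F t)).
Proof.
by move=> [[_ F_lift] _ _] comp AK Kt; rewrite F_lift -(comp K AK); exists (cover t).
Qed.

Lemma joined_image g F p q : monotone_lift g F -> compatible Ahat h g ->
  joined p q -> joined (F p) (F q).
Proof.
move=> L comp [K AK Kpq]; have [[Fc F_lift] Fm _] := L.
have seg_onto p' q' u : p' <= q' -> F p' <= u <= F q' ->
    exists2 w, between p' w q' & F w = u.
  move=> pq' Fpqu.
  have Fc' : {within `[p', q'], continuous F} by exact: continuous_subspaceT.
  have : Num.min (F p') (F q') <= u <= Num.max (F p') (F q').
    case/andP: Fpqu => ? ?; rewrite ge_min le_max.
    by apply/andP; split; apply/orP; [left|right].
  by move=> /(IVT pq' Fc') [w]; rewrite in_itv => /andP[? ?] Fw; exists w => //; left.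
exists (h K); first exact: hA.
move=> u pqu; have [w pqw <-] : exists2 w, between p w q & F w = u.
  case: pqu => -[? ?].
  - by apply: seg_onto; [rewrite -Fm; lra | apply/andP].
  - have [||w ? ?] := seg_onto q p u; [rewrite -Fm; lra | exact/andP |].
    by exists w => //; exact: between_sym.
exact: lift_mem_image L comp AK (Kpq w pqw).
Qed.

Lemma joined_preimage g F K p q : monotone_lift g F -> compatible Ahat h g ->
  set_inj S1 g -> Ahat K -> K (cover p) -> joined (F p) (F q) -> joined p q.
Proof.
move=> L comp g_inj AK Kp [K' AK' K'pq]; have [[_ F_lift] Fm _] := L.
have K'hK : K' = h K.
  apply: (Ahat_eq_of_meet (z := cover (F p))) => //; first exact: hA.
  - by apply: K'pq; exact: between_refl.
  - exact: lift_mem_image L comp AK Kp.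
exists K => // u pqu.
have : K' (cover (F u)) by apply: K'pq; case: pqu => -[? ?]; [left|right]; rewrite !Fm.
rewrite K'hK -(comp K AK) F_lift => -[v Kv gv].
suff -> : cover u = v by [].
by apply: g_inj => //; apply: mem_set; [exact: cover_S1 | exact: A_S1 Kv].
Qed.

(* an integer shift between [x] and [y] would push one of them across the
   segment joining [a] or [a + 1] to [b] or [b + 1] *)
Lemma joined_shift_eq0 a b x y (m : int) : joined b a ->
  a < x -> x < a + 1 -> b < y -> y < b + 1 ->
  ~ joined x a -> ~ joined x (a + 1) -> ~ joined y b -> ~ joined y (b + 1) ->
  joined y (x + m%:~R) -> m = 0.
Proof.
move=> ba ax xa1 b_y yb1 not_xa not_xa1 not_yb not_yb1 yxm.
have shift_back p q : joined (p + m%:~R) q -> joined p (q - m%:~R).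
  by move/(joined_intD (- m)); rewrite mulrNz -addrA subrr addr0.
have [m_lt0|m_gt0|//] := ltrgtP m 0.
- have m_le : m%:~R <= -1 :> R by rewrite -mulrN1z ler_int; lia.
  have [xm_le|xm_gt] := leP (x + m%:~R) b.
    by case: not_yb; apply: joined_subl yxm _; right; lra.
  have /shift_back : joined (x + m%:~R) a by apply: joined_subr ba _; left; lra.
  by move=> /joined_subl x_am; case: not_xa1; apply: x_am; left; lra.
- have m_ge : 1 <= m%:~R :> R by rewrite ler1z; lia.
  have [xm_ge|xm_lt] := leP (b + 1) (x + m%:~R).
    by case: not_yb1; apply: joined_subl yxm _; left; lra.
  have a1b1 : joined (a + 1) (b + 1) by exact: joined_sym (joined_intD 1 ba).
  have /joined_sym /shift_back : joined (a + 1) (x + m%:~R).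
    by apply: joined_subl a1b1 _; left; lra.
  by move=> /joined_subl x_a1m; case: not_xa; apply: x_a1m; right; lra.
Qed.

Section TwoLifts.
Variables (g1 g2 : R * R -> R * R) (F1 F2 : R -> R).
Hypotheses (L1 : monotone_lift g1 F1) (L2 : monotone_lift g2 F2).
Hypotheses (comp1 : compatible Ahat h g1) (comp2 : compatible Ahat h g2).
Hypotheses (g1_inj : set_inj S1 g1) (g2_inj : set_inj S1 g2).
Variables (t0 : R) (J0 : set (R * R)).
Hypotheses (AJ0 : Ahat J0) (J0t0 : J0 (cover t0)) (base : joined (F2 t0) (F1 t0)).

Lemma joined_lifts_of_joined t s :
  joined t s -> joined (F2 s) (F1 s) -> joined (F2 t) (F1 t).
Proof.
move=> ts F21s; apply: joined_trans (joined_image L2 comp2 ts) _.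
exact: joined_trans F21s (joined_sym (joined_image L1 comp1 ts)).
Qed.

Lemma joined_lifts_period t K : t0 <= t <= t0 + 1 -> Ahat K -> K (cover t) ->
  joined (F2 t) (F1 t).
Proof.
move=> /andP[t0_le le_t01] AK Kt.
have [_ F1m F1d] := L1; have [_ F2m F2d] := L2.
have [tt0|not_tt0] := pselect (joined t t0); first exact: joined_lifts_of_joined base.
have [tt1|not_tt1] := pselect (joined t (t0 + 1)).
  by apply: joined_lifts_of_joined tt1 _; rewrite F1d F2d; exact: (joined_intD 1 base).
have t0_lt : t0 < t.
  rewrite lt_neqAle t0_le andbT; apply/eqP => t0t.
  by apply: not_tt0; rewrite t0t; exact: joined_refl AK Kt.
have lt_t01 : t < t0 + 1.
  rewrite lt_neqAle le_t01 andbT; apply/eqP => tt1.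
  by apply: not_tt1; rewrite -tt1; exact: joined_refl AK Kt.
have not_joined_image g F s : monotone_lift g F -> compatible Ahat h g ->
    set_inj S1 g -> ~ joined t s -> ~ joined (F t) (F s).
  by move=> L comp g_inj not_ts /(joined_preimage L comp g_inj AK Kt).
have [m F21m] := joined_of_mem (hA AK) (lift_mem_image L2 comp2 AK Kt)
  (lift_mem_image L1 comp1 AK Kt).
suff m0 : m = 0 by rewrite m0 mulr0z addr0 in F21m.
apply: (joined_shift_eq0 base _ _ _ _ _ _ _ _ F21m).
- by rewrite (leW_mono F1m).
- by rewrite -F1d (leW_mono F1m).
- by rewrite (leW_mono F2m).
- by rewrite -F2d (leW_mono F2m).
- exact: not_joined_image L1 comp1 g1_inj not_tt0.
- by rewrite -F1d; exact: not_joined_image L1 comp1 g1_inj not_tt1.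
- exact: not_joined_image L2 comp2 g2_inj not_tt0.
- by rewrite -F2d; exact: not_joined_image L2 comp2 g2_inj not_tt1.
Qed.

Lemma joined_lifts t K : Ahat K -> K (cover t) -> joined (F2 t) (F1 t).
Proof.
move=> AK Kt; have [_ _ F1d] := L1; have [_ _ F2d] := L2.
have [t' t'_itv t't] := cover_shift_itv t0 t.
have [m tt'] := cover_eq_shift (esym t't).
rewrite tt' (degree_one_intD F1d) (degree_one_intD F2d); apply: joined_intD.
by apply: joined_lifts_period t'_itv AK _; rewrite t't.
Qed.

Lemma iter_lift_mem n : exists2 K, Ahat K & K (cover (iter n F1 t0)).
Proof.
elim: n => [|n [K AK Kn]]; first by exists J0.
by exists (h K); [exact: hA | exact: lift_mem_image L1 comp1 AK Kn].
Qed.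

Lemma joined_iter n : joined (iter n F2 t0) (iter n F1 t0).
Proof.
elim: n => [|n IHn]; first exact: joined_refl AJ0 J0t0.
have [K AK Kn] := iter_lift_mem n.
exact: joined_trans (joined_image L2 comp2 IHn) (joined_lifts AK Kn).
Qed.

End TwoLifts.

Lemma lifts_close_orbits g1 g2 : orient_pres_homeo g1 -> orient_pres_homeo g2 ->
  compatible Ahat h g1 -> compatible Ahat h g2 ->
  exists F1 F2 (t0 : R), [/\ monotone_lift g1 F1, monotone_lift g2 F2 &
    forall n, `|iter n F2 t0 - iter n F1 t0| < 1].
Proof.
move=> hg1 hg2 comp1 comp2.
have [[[_ g1_inj _] _] _] := hg1; have [[[_ g2_inj _] _] _] := hg2.
have [F1 L1] := orient_pres_homeo_lift hg1; have [F2 L2] := orient_pres_homeo_lift hg2.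
have [J0 [_ [AJ0 _ _]]] := A_two; have [z J0z] := A_ne AJ0.
have [t0 t0z] := S1_cover (A_S1 AJ0 J0z).
have J0t0 : J0 (cover t0) by rewrite t0z.
have [k base] := joined_of_mem (hA AJ0) (lift_mem_image L2 comp2 AJ0 J0t0)
  (lift_mem_image L1 comp1 AJ0 J0t0).
pose F1k t := F1 t + k%:~R.
have L1k : monotone_lift g1 F1k.
  have [[F1c F1_lift] F1m F1d] := L1; split; first split.
  - by move=> x; apply: continuousD; [exact: F1c | exact: cvg_cst].
  - by move=> t; rewrite /F1k cover_intD.
  - by move=> x y; rewrite /F1k lerD2r F1m.
  - by move=> t; rewrite /F1k F1d addrAC.
exists F1k, F2, t0; split => // n; apply: joined_lt1.
exact: (joined_iter L1k L2 comp1 comp2 g1_inj g2_inj AJ0 J0t0 base).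
Qed.

End Joined.

End RotationNumber.

Unset Implicit Arguments.

Theorem mainTheorem4 (R : realType) (Ahat : set (set (R * R)))
  (h : set (R * R) -> set (R * R)) (g1 g2 : R * R -> R * R) :
  (forall J, Ahat J -> J `<=` @S1 R) ->
  (forall J, Ahat J -> J !=set0) ->
  (forall J, Ahat J -> connected J) ->
  (forall J K, Ahat J -> Ahat K -> J <> K -> J `&` K = set0) ->
  (exists J1 J2 J3, [/\ Ahat J1, Ahat J2, Ahat J3 &
                        [/\ J1 <> J2, J1 <> J3 & J2 <> J3]]) ->
  @S1 R `<=` closure (\bigcup_(J in Ahat) J) ->
  (forall J, Ahat J -> (exists z, J = [set z]) \/ open_arc J) ->
  set_bij Ahat Ahat h ->
  order_preserving Ahat h ->
  orient_pres_homeo g1 -> orient_pres_homeo g2 ->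
  compatible Ahat h g1 -> compatible Ahat h g2 ->
  exists r : R, has_rotation_number g1 r /\ has_rotation_number g2 r.
Proof.
move=> A_S1 A_ne _ A_disj [J1 [J2 [_ [AJ1 AJ2 _ [J12 _ _]]]]] _ A_shape [hA _ _] _.
move=> hg1 hg2 comp1 comp2.
have A_two : exists J1 J2, [/\ Ahat J1, Ahat J2 & J1 <> J2] by exists J1, J2.
have [F1 [F2 [t0 [[F1_lift F1m F1d] [F2_lift F2m F2d] close]]]] :=
  lifts_close_orbits A_S1 A_ne A_disj A_two A_shape hA hg1 hg2 comp1 comp2.
have [rho F1_rho] := rotation_limit_exists (mono2W F1m) F1d.
exists rho; split; first exact: has_rotation_number_lift F1_lift F1d F1_rho.
apply: (has_rotation_number_lift F2_lift F2d).
exact: rotation_limit_close (mono2W F2m) F2d (fun n => ltW (close n)) F1_rho.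
Qed.
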